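(* Let $S$ be a Hausdorff countably compact topological semigroup which is algebraically a primitive inverse semigroup. Then the inversion $x\mapsto x^{-1}$ on $S$ is continuous if and only if every maximal subgroup of $S$ (with the subspace topology) is a topological group.
   Context: A topological semigroup is a Hausdorff space with jointly continuous associative operation. A semigroup is inverse if every $x$ has a unique $y=x^{-1}$ with $xyx=x$, $yxy=y$; it is primitive inverse if it is non-trivial, inverse, has a zero and all non-zero idempotents are minimal among non-zero idempotents in the natural order. A maximal subgroup is a maximal subgroup of $S$ containing a given idempotent. *)

From Stdlib Require Import Arith.

Set Implicit Arguments.

Record topology (X : Type) := Topology {
  is_open : (X -> Prop) -> Prop;
  open_full : is_open (fun _ => True);
  open_empty : is_open (fun _ => False);
  open_inter : forall U V, is_open U -> is_open V -> is_open (fun x => U x /\ V x);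
  open_union : forall (I : Type) (F : I -> X -> Prop),
      (forall i, is_open (F i)) -> is_open (fun x => exists i, F i x)
}.

Definition hausdorff {X} (T : topology X) : Prop :=
  forall x y : X, x <> y ->
    exists U V, is_open T U /\ is_open T V /\ U x /\ V y /\
                (forall z, U z -> V z -> False).

(* Countably compact: every countable open cover has a finite subcover.
   Countable covers are indexed by nat (repetitions allowed). *)
Definition countably_compact {X} (T : topology X) : Prop :=
  forall U : nat -> X -> Prop,
    (forall n, is_open T (U n)) ->
    (forall x, exists n, U n x) ->
    exists N, forall x, exists n, n <= N /\ U n x.

(* Continuity, stated for arbitrary families of open sets (so that it
   applies directly to product and subspace topologies below). *)
Definition continuous_wrt {X Y} (OX : (X -> Prop) -> Prop) (OY : (Y -> Prop) -> Prop)
  (f : X -> Y) : Prop :=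
  forall W, OY W -> OX (fun x => W (f x)).

Definition continuous {X Y} (TX : topology X) (TY : topology Y) (f : X -> Y) : Prop :=
  continuous_wrt (is_open TX) (is_open TY) f.

Definition prod_open {X Y} (OX : (X -> Prop) -> Prop) (OY : (Y -> Prop) -> Prop)
  (W : X * Y -> Prop) : Prop :=
  forall p, W p -> exists U V, OX U /\ OY V /\ U (fst p) /\ V (snd p) /\
     (forall a b, U a -> V b -> W (a, b)).

Definition sub_open {X} (T : topology X) (P : X -> Prop) (V : {x | P x} -> Prop) : Prop :=
  exists U, is_open T U /\ forall z, V z <-> U (proj1_sig z).

Section Semigroup.
Context {S : Type} (mul : S -> S -> S).

Definition associative : Prop := forall x y z, mul x (mul y z) = mul (mul x y) z.

Definition topological_semigroup (T : topology S) : Prop :=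
  hausdorff T /\ associative /\
  continuous_wrt (prod_open (is_open T) (is_open T)) (is_open T)
    (fun p => mul (fst p) (snd p)).

Definition inverse_semigroup : Prop :=
  associative /\
  forall x, exists! y, mul (mul x y) x = x /\ mul (mul y x) y = y.

Definition idempotent (e : S) : Prop := mul e e = e.

Definition is_zero (z : S) : Prop := forall x, mul z x = z /\ mul x z = z.

Definition idem_le (f e : S) : Prop := f = mul e f /\ f = mul f e.

Definition primitive_inverse_semigroup : Prop :=
  inverse_semigroup /\
  exists z, is_zero z /\ (exists x, x <> z) /\
    forall e f, idempotent e -> idempotent f -> e <> z -> f <> z ->
      idem_le f e -> f = e.

Definition is_subgroup (G : S -> Prop) (e : S) : Prop :=
  G e /\
  (forall x y, G x -> G y -> G (mul x y)) /\
  (forall x, G x -> mul e x = x /\ mul x e = x) /\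
  (forall x, G x -> exists y, G y /\ mul x y = e /\ mul y x = e).

Definition maximal_subgroup (G : S -> Prop) (e : S) : Prop :=
  is_subgroup G e /\
  forall (G' : S -> Prop) (e' : S), is_subgroup G' e' ->
    (forall x, G x -> G' x) -> forall x, G' x -> G x.

Definition topological_subgroup (T : topology S) (G : S -> Prop) (e : S) : Prop :=
  exists (m : {x | G x} -> {x | G x} -> {x | G x}) (i : {x | G x} -> {x | G x}),
    (forall a b, proj1_sig (m a b) = mul (proj1_sig a) (proj1_sig b)) /\
    (forall a, mul (proj1_sig a) (proj1_sig (i a)) = e /\
               mul (proj1_sig (i a)) (proj1_sig a) = e) /\
    continuous_wrt (prod_open (sub_open T G) (sub_open T G)) (sub_open T G)
      (fun p => m (fst p) (snd p)) /\
    continuous_wrt (sub_open T G) (sub_open T G) i.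

End Semigroup.

From Stdlib Require Import Classical ClassicalEpsilon FunctionalExtensionality
  PropExtensionality List Arith Lia.

(* If inversion is continuous, every subgroup is a topological group, its
   operations being restrictions of the continuous maps of S.

   Conversely, the maximal subgroups are the H-classes H_f = {g | g·g⁻¹ = f =
   g⁻¹·g} of the idempotents f.  By primitivity, near a non-zero point a every
   x has the same range e and domain f as a, so x = a·g with g ∈ H_f, and
   x⁻¹ = g⁻¹·a⁻¹ is continuous in x.  At zero we use countable compactness
   twice: outside a neighbourhood of zero only finitely many ranges and domains
   occur (the sets {u | e·u ≠ 0} form an open partition), and zero is not in the
   closure of any H_f with f ≠ 0 (a total-boundedness argument in H_f). *)

Set Implicit Arguments.
Unset Strict Implicit.

Section GeneralTopology.
Variables (X : Type) (T : topology X).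

Definition closed (D : X -> Prop) : Prop := is_open T (fun x => ~ D x).

Definition near (a : X) (P : X -> Prop) : Prop :=
  exists U, is_open T U /\ U a /\ forall x, U x -> P x.

Lemma open_ext (U V : X -> Prop) :
  is_open T U -> (forall x, U x <-> V x) -> is_open T V.
Proof.
  intros HU E. replace V with U; auto.
  apply functional_extensionality; intro x. apply propositional_extensionality, E.
Qed.

Lemma open_of_near (A : X -> Prop) : (forall x, A x -> near x A) -> is_open T A.
Proof.
  intro H.
  set (Nb := {U : X -> Prop | is_open T U /\ forall y, U y -> A y}).
  apply (@open_ext (fun x => exists i : Nb, proj1_sig i x)).
  - apply open_union. intro i. exact (proj1 (proj2_sig i)).
  - intro x. split.
    + intros [i Ux]. exact (proj2 (proj2_sig i) x Ux).
    + intro Ax. destruct (H x Ax) as [U [HU [Ux HA]]].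
      exists (exist _ U (conj HU HA)). exact Ux.
Qed.

Lemma closed_compl (W : X -> Prop) : is_open T W -> closed (fun x => ~ W x).
Proof. intro HW. apply (open_ext HW). intro x. split; [tauto | apply NNPP]. Qed.

Lemma near_and a (P Q : X -> Prop) :
  near a P -> near a Q -> near a (fun x => P x /\ Q x).
Proof.
  intros [U [HU [Ua PU]]] [V [HV [Va QV]]].
  exists (fun x => U x /\ V x). split; [apply open_inter; auto|].
  split; [auto | intros x [Ux Vx]; auto].
Qed.

Lemma near_list {J : Type} a (P : J -> X -> Prop) (l : list J) :
  (forall i, In i l -> near a (P i)) -> near a (fun x => forall i, In i l -> P i x).
Proof.
  induction l as [|j l IH]; intro H.
  - exists (fun _ => True). split; [apply open_full | split; [exact I | intros x _ i []]].
  - destruct (near_and (H j (or_introl eq_refl)) (IH (fun i Hi => H i (or_intror Hi))))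
      as [U [HU [Ua HP]]].
    exists U. split; [exact HU|split; [exact Ua|]].
    intros x Ux i [<-|Hi]; [exact (proj1 (HP x Ux)) | exact (proj2 (HP x Ux) i Hi)].
Qed.

Lemma open_neq : hausdorff T -> forall c, is_open T (fun x => x <> c).
Proof.
  intros HT c. apply open_of_near. intros x Hx.
  destruct (HT x c Hx) as [U [V [HU [HV [Ux [Vc D]]]]]].
  exists U. repeat split; auto. intros y Uy ->. exact (D c Uy Vc).
Qed.

Hypothesis countably_compact_T : countably_compact T.

Lemma cluster_point (D : X -> Prop) (c : nat -> X) :
  closed D -> (forall n, D (c n)) ->
  exists p, D p /\ forall Q, is_open T Q -> Q p -> forall N, exists n, N <= n /\ Q (c n).
Proof.
  intros HD Dc. apply NNPP. intro Hno.
  (* Otherwise the complement of D together with the open sets eventually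
     avoided by c form a countable open cover with no finite subcover. *)
  assert (Hall : forall p, D p ->
            exists Q N, is_open T Q /\ Q p /\ forall n, N <= n -> ~ Q (c n)).
  { intros p Dp. apply NNPP. intro H1. apply Hno. exists p. split; auto.
    intros Q HQ Qp N. apply NNPP. intro H2. apply H1. exists Q, N. repeat split; auto.
    intros n Hn Qn. apply H2. exists n; auto. }
  set (U := fun n x => match n with
                       | 0 => ~ D x
                       | S k => exists Q, is_open T Q /\ Q x /\ forall n, k <= n -> ~ Q (c n)
                       end).
  destruct (@countably_compact_T U) as [N HN].
  - intros [|k]; simpl; [exact HD|].
    apply open_of_near. intros x [Q [HQ [Qx HQc]]]. exists Q. repeat split; auto.
    intros y Qy. exists Q. repeat split; auto.
  - intro x. destruct (classic (D x)) as [Dx|Dx].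
    + destruct (Hall x Dx) as [Q [N [HQ [Qx HQc]]]]. exists (S N). simpl. exists Q; auto.
    + exists 0. exact Dx.
  - destruct (HN (c N)) as [[|k] [Hk Uk]]; simpl in Uk.
    + exact (Uk (Dc N)).
    + destruct Uk as [Q [_ [Qc HQc]]]. apply (HQc N); [lia | exact Qc].
Qed.

End GeneralTopology.

Lemma greedy_sequence {X : Type} (P : list X -> X -> Prop) :
  (forall l, exists x, P l x) ->
  exists s : nat -> X, forall n, exists l, P l (s n) /\ forall k, k < n -> In (s k) l.
Proof.
  intro H.
  set (next := fun l => proj1_sig (constructive_indefinite_description _ (H l))).
  assert (Hn : forall l, P l (next l))
    by (intro l; exact (proj2_sig (constructive_indefinite_description _ (H l)))).
  set (hist := fix hist (n : nat) : list X :=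
         match n with 0 => nil | S m => next (hist m) :: hist m end).
  exists (fun n => next (hist n)). intro n. exists (hist n). split; auto.
  induction n as [|n IH]; intros k Hk; [lia|].
  simpl. destruct (Nat.eq_dec k n) as [->|E]; [left; auto | right; apply IH; lia].
Qed.

(* A closed subset F of a countably compact space, partitioned into the fibres
   of [phi] each of which is relatively open (cut out by an open set [P i]),
   has only finitely many pieces. *)
Lemma finite_open_partition {X J : Type} (T : topology X) (F : X -> Prop)
    (phi : X -> J) (P : J -> X -> Prop) :
  countably_compact T -> closed T F -> (forall i, is_open T (P i)) ->
  (forall x, F x -> P (phi x) x) -> (forall i x, F x -> P i x -> phi x = i) ->
  exists l, forall x, F x -> In (phi x) l.
Proof.
  intros CC HF HP Hphi Hfib. apply NNPP. intro Hno.
  (* Choose points of F with pairwise distinct values of phi. *)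
  assert (Hnext : forall l, exists x, F x /\ forall y, In y l -> phi y <> phi x).
  { intro l. apply NNPP. intro H. apply Hno. exists (map phi l). intros x Fx.
    apply NNPP. intro Hx. apply H. exists x. split; [exact Fx|].
    intros y Hy E. apply Hx. rewrite <- E. apply in_map, Hy. }
  destruct (greedy_sequence Hnext) as [s Hs].
  assert (Fs : forall n, F (s n)) by (intro n; destruct (Hs n) as [l [[Fn _] _]]; exact Fn).
  destruct (cluster_point CC HF Fs) as [p [Fp Hp]].
  (* The piece of the cluster point contains two distinct terms: absurd. *)
  destruct (Hp _ (HP (phi p)) (Hphi p Fp) 0) as [n [_ Pn]].
  destruct (Hp _ (HP (phi p)) (Hphi p Fp) (S n)) as [m [Hm Pm]].
  destruct (Hs m) as [l [[_ Hl] Hin]].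
  apply (Hl (s n)); [apply Hin; lia|].
  rewrite (Hfib _ _ (Fs m) Pm). exact (Hfib _ _ (Fs n) Pn).
Qed.

Definition continuous_at {X Y : Type} (TX : topology X) (TY : topology Y)
  (f : X -> Y) (a : X) : Prop :=
  forall W, is_open TY W -> W (f a) -> near TX a (fun x => W (f x)).

Lemma continuous_of_continuous_at {X Y : Type} (TX : topology X) (TY : topology Y)
    (f : X -> Y) :
  (forall a, continuous_at TX TY f a) -> continuous TX TY f.
Proof.
  intros H W HW. apply open_of_near. intros a Wa. exact (H a W HW Wa).
Qed.

Section ContinuousMultiplication.
Variables (S : Type) (T : topology S) (mul : S -> S -> S).
Hypothesis mul_continuous : continuous_wrt (prod_open (is_open T) (is_open T)) (is_open T)
  (fun p => mul (fst p) (snd p)).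

Lemma mul_near (W : S -> Prop) a b :
  is_open T W -> W (mul a b) ->
  exists U V, is_open T U /\ is_open T V /\ U a /\ V b /\
    forall u v, U u -> V v -> W (mul u v).
Proof.
  intros HW Wab. destruct (@mul_continuous W HW (a, b) Wab) as [U [V [HU [HV [Ua [Vb HUV]]]]]].
  exists U, V. repeat split; auto.
Qed.

Lemma open_lmul (W : S -> Prop) a : is_open T W -> is_open T (fun x => W (mul a x)).
Proof.
  intro HW. apply open_of_near. intros x Wx.
  destruct (mul_near HW Wx) as [U [V [_ [HV [Ua [Vx H]]]]]].
  exists V. repeat split; auto.
Qed.

Lemma open_rmul (W : S -> Prop) a : is_open T W -> is_open T (fun x => W (mul x a)).
Proof.
  intro HW. apply open_of_near. intros x Wx.
  destruct (mul_near HW Wx) as [U [V [HU [_ [Ux [Va H]]]]]].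
  exists U. repeat split; auto.
Qed.

Lemma near_square (W : S -> Prop) a :
  is_open T W -> W (mul a a) ->
  exists V, is_open T V /\ V a /\ forall u v, V u -> V v -> W (mul u v).
Proof.
  intros HW Waa. destruct (mul_near HW Waa) as [U1 [U2 [HU1 [HU2 [U1a [U2a H]]]]]].
  exists (fun x => U1 x /\ U2 x). split; [apply open_inter; assumption|].
  split; [split; assumption|]. intros u v [Uu _] [_ Uv]. exact (H u v Uu Uv).
Qed.

End ContinuousMultiplication.
Section InverseSemigroup.
Variables (S : Type) (mul : S -> S -> S) (inv : S -> S).
Local Infix "·" := mul (at level 40, left associativity).

Hypothesis assoc : forall x y w, x · (y · w) = x · y · w.
Hypothesis unique_inverse : forall x, exists! y, x · y · x = x /\ y · x · y = y.
Hypothesis inv_regular : forall x, x · inv x · x = x /\ inv x · x · inv x = inv x.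

Lemma inv_l x : x · inv x · x = x.
Proof. exact (proj1 (inv_regular x)). Qed.

Lemma inv_r x : inv x · x · inv x = inv x.
Proof. exact (proj2 (inv_regular x)). Qed.

Lemma inv_unique x y : x · y · x = x -> y · x · y = y -> y = inv x.
Proof.
  intros H1 H2. destruct (unique_inverse x) as [y0 [_ U]].
  transitivity y0; [symmetry|]; apply U; auto using inv_l, inv_r.
Qed.

Lemma rewrite_ctx2 u v w : u · v = w -> forall x, x · u · v = x · w.
Proof. intros H x. rewrite <- assoc, H. reflexivity. Qed.

Lemma rewrite_ctx3 u v t w : u · v · t = w -> forall x, x · u · v · t = x · w.
Proof. intros H x. rewrite <- !assoc, (assoc u), H. reflexivity. Qed.

Lemma rewrite_ctx4 u v t r w : u · v · t · r = w -> forall x, x · u · v · t · r = x · w.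
Proof. intros H x. rewrite <- !assoc, (assoc u), (assoc (u · v)), H. reflexivity. Qed.

Local Ltac normalize := repeat rewrite assoc.
Local Tactic Notation "normalize" "in" hyp(H) := repeat rewrite assoc in H.
Local Ltac rewrite_in_product H :=
  first [rewrite H | rewrite (rewrite_ctx2 H) | rewrite (rewrite_ctx3 H)
        | rewrite (rewrite_ctx4 H)].

Lemma inv_inv x : inv (inv x) = x.
Proof. symmetry; apply inv_unique; [apply inv_r | apply inv_l]. Qed.

Lemma idem_inv e : e · e = e -> inv e = e.
Proof. intro He. symmetry; apply inv_unique; rewrite !He; reflexivity. Qed.

Lemma range_idem x : x · inv x · (x · inv x) = x · inv x.
Proof. rewrite assoc, inv_l. reflexivity. Qed.

Lemma domain_idem x : inv x · x · (inv x · x) = inv x · x.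
Proof. rewrite assoc, inv_r. reflexivity. Qed.

(* The product of two idempotents is idempotent: the inverse a of e·f
   satisfies a = f·a·e, hence is idempotent, and so equal to its inverse e·f. *)
Lemma idem_mul e f : e · e = e -> f · f = f -> e · f · (e · f) = e · f.
Proof.
  intros He Hf. set (a := inv (e · f)).
  assert (L : e · f · a · e · f = e · f).
  { pose proof (inv_l (e · f)) as L. fold a in L. normalize in L. exact L. }
  assert (R : a · e · f · a = a).
  { pose proof (inv_r (e · f)) as R. fold a in R. normalize in R. exact R. }
  assert (Ha : f · a · e = a).
  { apply (@inv_unique (e · f)); normalize.
    - rewrite_in_product Hf. rewrite_in_product He. exact L.
    - rewrite_in_product He. rewrite_in_product Hf. rewrite_in_product R. reflexivity. }
  assert (Haa : a · a = a).
  { rewrite <- Ha at 1. normalize. rewrite <- Ha at 2. normalize.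
    rewrite_in_product R. exact Ha. }
  assert (E : e · f = a).
  { rewrite <- (inv_inv (e · f)). apply idem_inv, Haa. }
  rewrite E. exact Haa.
Qed.

Lemma idem_comm e f : e · e = e -> f · f = f -> e · f = f · e.
Proof.
  intros He Hf.
  pose proof (idem_mul He Hf) as P1. pose proof (idem_mul Hf He) as P2.
  rewrite <- (idem_inv P1). symmetry. apply inv_unique; normalize.
  - rewrite_in_product Hf. rewrite_in_product He. normalize in P1. exact P1.
  - rewrite_in_product He. rewrite_in_product Hf. normalize in P2. exact P2.
Qed.

Lemma inv_mul x y : inv (x · y) = inv y · inv x.
Proof.
  pose proof (idem_comm (range_idem y) (domain_idem x)) as C.
  symmetry. apply inv_unique.
  - transitivity (x · (y · inv y · (inv x · x)) · y); [normalize; reflexivity|].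
    rewrite C. normalize. rewrite_in_product (inv_l x). rewrite_in_product (inv_l y).
    reflexivity.
  - transitivity (inv y · (inv x · x · (y · inv y)) · inv x); [normalize; reflexivity|].
    rewrite <- C. normalize. rewrite_in_product (inv_r y). rewrite_in_product (inv_r x).
    reflexivity.
Qed.

Lemma subgroup_inv (G : S -> Prop) e g y :
  is_subgroup mul G e -> G g -> G y -> g · y = e -> y · g = e -> y = inv g.
Proof.
  intros [_ [_ [Hid _]]] Gg Gy E1 E2. apply inv_unique.
  - rewrite E1. apply (Hid g Gg).
  - rewrite E2. apply (Hid y Gy).
Qed.

Definition hclass (f g : S) : Prop := g · inv g = f /\ inv g · g = f.

Lemma hclass_left_id f g : hclass f g -> f · g = g.
Proof. intros [H1 _]. rewrite <- H1. apply inv_l. Qed.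

Lemma hclass_right_id f g : hclass f g -> g · f = g.
Proof. intros [_ H2]. rewrite <- H2, assoc. apply inv_l. Qed.

Lemma hclass_inv f g : hclass f g -> hclass f (inv g).
Proof. intros [H1 H2]. split; rewrite inv_inv; assumption. Qed.

Lemma hclass_mul f g h : hclass f g -> hclass f h -> hclass f (g · h).
Proof.
  intros Hg Hh. pose proof (hclass_right_id Hg) as Eg. pose proof (hclass_left_id Hh) as Eh.
  destruct Hg as [g1 g2], Hh as [h1 h2]. unfold hclass. rewrite inv_mul. split.
  - rewrite <- assoc, (assoc h), h1, assoc, Eg, g1. reflexivity.
  - rewrite <- assoc, (assoc (inv g)), g2, Eh, h2. reflexivity.
Qed.

Lemma hclass_self f : f · f = f -> hclass f f.
Proof. intro E. unfold hclass. rewrite (idem_inv E), E. split; reflexivity. Qed.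

Lemma hclass_maximal f : f · f = f -> maximal_subgroup mul (hclass f) f.
Proof.
  intro Ef. split.
  - split; [apply hclass_self, Ef|].
    split; [intros x y; apply hclass_mul|].
    split; [intros x Hx; split; [apply hclass_left_id | apply hclass_right_id]; exact Hx|].
    intros x Hx. exists (inv x). split; [apply hclass_inv, Hx | exact Hx].
  - intros G e HG sub x Gx.
    assert (Gf : G f) by (apply sub, hclass_self, Ef).
    pose proof HG as [Ge [Gm [Gid Ginv]]].
    assert (fe : f = e).
    { destruct (Ginv f Gf) as [u [_ [fu _]]].
      rewrite <- fu. rewrite <- Ef at 2. rewrite <- assoc, fu.
      exact (eq_sym (proj2 (Gid f Gf))). }
    subst e. destruct (Ginv x Gx) as [y [Gy [xy yx]]].
    pose proof (subgroup_inv HG Gx Gy xy yx) as Ey. subst y. split; assumption.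
Qed.

Lemma hclass_translate e f a x :
  a · inv a = e -> inv a · a = f -> x · inv x = e -> inv x · x = f ->
  hclass f (inv a · x).
Proof.
  intros a1 a2 x1 x2. unfold hclass. rewrite inv_mul, inv_inv. split.
  - transitivity (inv a · (x · inv x) · a); [normalize; reflexivity|].
    rewrite x1, <- a1. normalize. rewrite inv_r. exact a2.
  - transitivity (inv x · (a · inv a) · x); [normalize; reflexivity|].
    rewrite a1, <- x1. normalize. rewrite inv_r. exact x2.
Qed.

Section ContinuousInversion.
Variable T : topology S.
Hypothesis mul_continuous : continuous_wrt (prod_open (is_open T) (is_open T)) (is_open T)
  (fun p => fst p · snd p).
Hypothesis inv_continuous : continuous T T inv.

Lemma subgroup_topological (G : S -> Prop) e :
  is_subgroup mul G e -> topological_subgroup mul T G e.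
Proof.
  intro SG. pose proof SG as [Ge [Gm [Gid Ginv]]].
  assert (Gi : forall g, G g -> G (inv g) /\ g · inv g = e /\ inv g · g = e).
  { intros g Gg. destruct (Ginv g Gg) as [y [Gy [E1 E2]]].
    rewrite <- (subgroup_inv SG Gg Gy E1 E2). auto. }
  exists (fun a b => exist _ (proj1_sig a · proj1_sig b) (Gm _ _ (proj2_sig a) (proj2_sig b))).
  exists (fun a => exist _ (inv (proj1_sig a)) (proj1 (Gi _ (proj2_sig a)))).
  split; [reflexivity|split; [|split]].
  - intro a. exact (proj2 (Gi _ (proj2_sig a))).
  - intros V [U [HU EU]] [a b] Vab. apply EU in Vab. simpl in Vab.
    destruct (mul_near mul_continuous HU Vab) as [U1 [U2 [HU1 [HU2 [U1a [U2b H]]]]]].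
    exists (fun g => U1 (proj1_sig g)), (fun g => U2 (proj1_sig g)).
    split; [exists U1; split; [exact HU1 | tauto]|].
    split; [exists U2; split; [exact HU2 | tauto]|].
    split; [exact U1a|split; [exact U2b|]].
    intros c d Uc Ud. apply EU. exact (H _ _ Uc Ud).
  - intros V [U [HU EU]]. exists (fun x => U (inv x)). split.
    + exact (inv_continuous HU).
    + intro g. rewrite EU. reflexivity.
Qed.

End ContinuousInversion.

Section Primitive.
Variable z : S.
Hypothesis zero_z : is_zero mul z.
Hypothesis primitive : forall e f, idempotent mul e -> idempotent mul f -> e <> z -> f <> z ->
  idem_le mul f e -> f = e.

Lemma zero_l x : z · x = z.
Proof. exact (proj1 (zero_z x)). Qed.

Lemma zero_r x : x · z = z.
Proof. exact (proj2 (zero_z x)). Qed.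

Lemma inv_zero : inv z = z.
Proof. apply idem_inv, zero_l. Qed.

(* Key consequence of primitivity: if e·x is non-zero for an idempotent e,
   then e is the range x·x⁻¹ of x.  Indeed g = e·(x·x⁻¹) is a non-zero
   idempotent below both e and x·x⁻¹, so equals both. *)
Lemma range_of_nonzero e x : e · e = e -> e · x <> z -> x · inv x = e.
Proof.
  intros He Hx. set (p := x · inv x).
  assert (Hp : p · p = p) by apply range_idem.
  assert (C := idem_comm He Hp).
  set (g := e · p).
  assert (Hg : g · g = g) by exact (idem_mul He Hp).
  assert (Egx : g · x = e · x) by (unfold g, p; rewrite <- !assoc, (assoc x), inv_l; reflexivity).
  assert (gz : g <> z) by (intro E; apply Hx; rewrite <- Egx, E; apply zero_l).
  assert (ez : e <> z) by (intro E; apply Hx; rewrite E; apply zero_l).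
  assert (pz : p <> z) by (intro E; apply gz; unfold g; rewrite E; apply zero_r).
  assert (ge : g = e).
  { apply primitive; auto. split; unfold g.
    - rewrite assoc, He. reflexivity.
    - rewrite C, <- assoc, He. reflexivity. }
  assert (gp : g = p).
  { apply primitive; auto. split; unfold g.
    - rewrite assoc, <- C, <- assoc, Hp. reflexivity.
    - rewrite <- assoc, Hp. reflexivity. }
  congruence.
Qed.

Lemma domain_of_nonzero e x : e · e = e -> x · e <> z -> inv x · x = e.
Proof.
  intros He Hx. rewrite <- (inv_inv x) at 2. apply (range_of_nonzero He).
  intro E. apply Hx.
  rewrite <- (inv_inv (x · e)), inv_mul, (idem_inv He), E. apply inv_zero.
Qed.

Lemma hclass_of_nonzero f x : f · f = f -> f · x <> z -> x · f <> z -> hclass f x.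
Proof.
  intros Hf H1 H2. split; [exact (range_of_nonzero Hf H1) | exact (domain_of_nonzero Hf H2)].
Qed.


Section Topological.
Variable T : topology S.
Hypothesis hausdorff_T : hausdorff T.
Hypothesis mul_continuous : continuous_wrt (prod_open (is_open T) (is_open T)) (is_open T)
  (fun p => fst p · snd p).
Hypothesis countably_compact_T : countably_compact T.

Definition inv_continuous_on (G : S -> Prop) : Prop :=
  forall W, is_open T W -> exists U, is_open T U /\ forall g, G g -> (U g <-> W (inv g)).

(* A closed part D of an H-class with continuous inversion is covered by
   finitely many translates d·Q (d ∈ D) of any neighbourhood Q of the
   identity.  Otherwise a sequence with d⁻¹c ∉ Q along it would exist, and
   near its cluster point p (with p⁻¹p = f ∈ Q) two of its terms collide. *)
Lemma hclass_finite_cover f (D Q : S -> Prop) :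
  inv_continuous_on (hclass f) -> closed T D -> (forall x, D x -> hclass f x) ->
  is_open T Q -> Q f ->
  exists l, forall c, D c -> exists d, In d l /\ D d /\ Q (inv d · c).
Proof.
  intros Hinv HD DH HQ Qf. apply NNPP. intro Hno.
  assert (Hnext : forall l, exists c, D c /\ forall d, In d l -> D d -> ~ Q (inv d · c)).
  { intro l. apply NNPP. intro H. apply Hno. exists l. intros c Dc.
    apply NNPP. intro Hc. apply H. exists c. split; [exact Dc|].
    intros d Hd Dd Qd. apply Hc. exists d. auto. }
  destruct (greedy_sequence Hnext) as [s Hs].
  assert (Ds : forall n, D (s n)) by (intro n; destruct (Hs n) as [l [[Dn _] _]]; exact Dn).
  destruct (cluster_point countably_compact_T HD Ds) as [p [Dp Hp]].
  assert (Qpp : Q (inv p · p)) by (rewrite (proj2 (DH p Dp)); exact Qf).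
  destruct (mul_near mul_continuous HQ Qpp) as [P1 [P2 [HP1 [HP2 [P1p [P2p HPP]]]]]].
  destruct (Hinv P1 HP1) as [U0 [HU0 EU0]].
  (* U0 ∩ P2 is a neighbourhood of p whose points c, c' of D satisfy c⁻¹c' ∈ Q. *)
  assert (HN : is_open T (fun x => U0 x /\ P2 x)) by (apply open_inter; assumption).
  assert (Np : U0 p /\ P2 p) by (split; [apply EU0; [apply DH|]; assumption | exact P2p]).
  destruct (Hp _ HN Np 0) as [n [_ [U0n P2n]]].
  destruct (Hp _ HN Np (n + 1)) as [m [Hm [_ P2m]]].
  destruct (Hs m) as [l [[_ Hl] Hin]].
  apply (Hl (s n)); [apply Hin; lia | apply Ds|].
  apply HPP; [apply EU0; [apply DH, Ds | exact U0n] | exact P2m].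
Qed.

(* Removing a neighbourhood V of zero from the H-class of f leaves a closed set:
   a point outside the H-class annihilates f on one side, and so do its
   neighbours up to V. *)
Lemma hclass_minus_closed f (V : S -> Prop) :
  f · f = f -> is_open T V -> V z -> closed T (fun x => hclass f x /\ ~ V x).
Proof.
  intros Hf HV Vz. apply open_of_near. intros x Hx.
  destruct (classic (V x)) as [Vx|Vx].
  - exists V. split; [exact HV|split; [exact Vx|]]. intros y Vy [_ nVy]. exact (nVy Vy).
  - destruct (classic (f · x = z)) as [fx|fx]; [|destruct (classic (x · f = z)) as [xf|xf]].
    + exists (fun u => V (f · u)). split; [apply (open_lmul mul_continuous), HV|].
      split; [rewrite fx; exact Vz|].
      intros y Vy [Hy nVy]. apply nVy. rewrite <- (hclass_left_id Hy). exact Vy.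
    + exists (fun u => V (u · f)). split; [apply (open_rmul mul_continuous), HV|].
      split; [rewrite xf; exact Vz|].
      intros y Vy [Hy nVy]. apply nVy. rewrite <- (hclass_right_id Hy). exact Vy.
    + exfalso. apply Hx. split; [exact (hclass_of_nonzero Hf fx xf) | exact Vx].
Qed.

(* Take V ∋ z with f ∉ V, V1 ∋ z with V1·V1 ⊆ V, and P0 ∋ z, Q0 ∋ f with
   P0·Q0 ⊆ V.  Cover D = H_f \ V1 by finitely many d·Q0.  An element g of H_f
   close enough to z lies in V1 and has g·d ∈ P0 for these d; then g⁻¹ ∉ V1
   (as g·g⁻¹ = f ∉ V), so g⁻¹ ∈ d·Q0 for some d and
   f = (g·d)·(d⁻¹·g⁻¹) ∈ V. *)
Lemma hclass_isolated f :
  f · f = f -> f <> z -> inv_continuous_on (hclass f) -> near T z (fun g => ~ hclass f g).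
Proof.
  intros Hf fz Hinv. apply NNPP. intro Hno.
  destruct (hausdorff_T (fun E => fz (eq_sym E))) as [V [O [HV [_ [Vz [Of DVO]]]]]].
  assert (nVf : ~ V f) by (intro Vf; exact (DVO f Vf Of)).
  destruct (near_square mul_continuous HV (eq_ind_r V Vz (zero_l z)))
    as [V1 [HV1 [V1z V1V]]].
  destruct (mul_near mul_continuous HV (eq_ind_r V Vz (zero_l f)))
    as [P0 [Q0 [HP0 [HQ0 [P0z [Q0f HPQ]]]]]].
  destruct (hclass_finite_cover Hinv (hclass_minus_closed Hf HV1 V1z) (fun x Dx => proj1 Dx)
              HQ0 Q0f) as [l Hl].
  assert (Hnear : near T z (fun x => V1 x /\ forall d, In d l -> P0 (x · d))).
  { apply near_and; [exists V1; auto|]. apply near_list. intros d _.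
    exists (fun x => P0 (x · d)). split; [apply (open_rmul mul_continuous), HP0|].
    split; [rewrite zero_l; exact P0z | auto]. }
  apply Hno. destruct Hnear as [U [HU [Uz HUP]]].
  exists U. split; [exact HU|split; [exact Uz|]]. intros g Ug Hg.
  destruct (HUP g Ug) as [V1g Pg].
  assert (nV1g' : ~ V1 (inv g)) by (intro H; apply nVf; rewrite <- (proj1 Hg); auto).
  destruct (Hl (inv g) (conj (hclass_inv Hg) nV1g')) as [d [Hd [[Hdd _] Qd]]].
  apply nVf. replace f with (g · d · (inv d · inv g)).
  - apply HPQ; [apply Pg, Hd | exact Qd].
  - transitivity (g · (d · inv d) · inv g); [rewrite !assoc; reflexivity|].
    rewrite (proj1 Hdd), (hclass_right_id Hg). exact (proj1 Hg).
Qed.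

Hypothesis subgroups_topological :
  forall (G : S -> Prop) (e : S), maximal_subgroup mul G e -> topological_subgroup mul T G e.

Lemma hclass_inv_continuous f : f · f = f -> inv_continuous_on (hclass f).
Proof.
  intros Ef W HW.
  pose proof (hclass_maximal Ef) as MH.
  destruct (subgroups_topological MH) as [m [i [_ [Hi [_ Ci]]]]].
  assert (Ei : forall g, proj1_sig (i g) = inv (proj1_sig g)).
  { intro g. destruct (Hi g) as [E1 E2].
    exact (subgroup_inv (proj1 MH) (proj2_sig g) (proj2_sig (i g)) E1 E2). }
  destruct (Ci (fun g => W (proj1_sig g))) as [U [HU EU]].
  { exists W. split; [exact HW | reflexivity]. }
  exists U. split; [exact HU|]. intros g Hg.
  specialize (EU (exist _ g Hg)). simpl in EU. rewrite Ei in EU. symmetry. exact EU.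
Qed.

(* Each "cell" {x | x·x⁻¹ = e, x⁻¹·x = f} (a left translate of the H-class
   of f) stays away from zero. *)
Lemma cell_isolated e f :
  near T z (fun x => x <> z -> ~ (x · inv x = e /\ inv x · x = f)).
Proof.
  destruct (classic (exists a, a <> z /\ a · inv a = e /\ inv a · a = f))
    as [[a [az [ae af]]]|Hempty].
  - assert (Ef : f · f = f) by (rewrite <- af; apply domain_idem).
    assert (fz : f <> z).
    { intro E. apply az. rewrite <- (inv_l a), <- assoc, af, E. apply zero_r. }
    destruct (hclass_isolated Ef fz (hclass_inv_continuous Ef)) as [U0 [HU0 [U0z HU]]].
    exists (fun x => U0 (inv a · x)). split; [apply (open_lmul mul_continuous), HU0|].
    split; [rewrite zero_r; exact U0z|].
    intros x Ux _ [xe xf]. exact (HU _ Ux (hclass_translate ae af xe xf)).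
  - exists (fun _ => True). split; [apply open_full|split; [exact I|]].
    intros x _ xz [xe xf]. apply Hempty. exists x. auto.
Qed.

(* Outside a neighbourhood of zero only finitely many ranges occur: the sets
   {u | e·u ≠ z} are open and, by primitivity, cut out the elements of range e. *)
Lemma finitely_many_ranges (W : S -> Prop) :
  is_open T W -> W z -> exists l, forall y, ~ W y -> In (y · inv y) l.
Proof.
  intros HW Wz.
  apply (finite_open_partition (P := fun e u => e · e = e /\ e · u <> z)
           countably_compact_T (closed_compl HW)).
  - intro e. destruct (classic (e · e = e)) as [Ee|Ee].
    + apply (open_ext (open_lmul mul_continuous e (open_neq hausdorff_T z))). tauto.
    + apply (open_ext (open_empty T)). tauto.
  - intros x Wx. split; [apply range_idem | rewrite inv_l; intro E; subst; auto].
  - intros e u _ [Ee Eu]. exact (range_of_nonzero Ee Eu).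
Qed.

Lemma finitely_many_domains (W : S -> Prop) :
  is_open T W -> W z -> exists l, forall y, ~ W y -> In (inv y · y) l.
Proof.
  intros HW Wz.
  apply (finite_open_partition (P := fun e u => e · e = e /\ u · e <> z)
           countably_compact_T (closed_compl HW)).
  - intro e. destruct (classic (e · e = e)) as [Ee|Ee].
    + apply (open_ext (open_rmul mul_continuous e (open_neq hausdorff_T z))). tauto.
    + apply (open_ext (open_empty T)). tauto.
  - intros x Wx. split; [apply domain_idem | rewrite assoc, inv_l; intro E; subst; auto].
  - intros e u _ [Ee Eu]. exact (domain_of_nonzero Ee Eu).
Qed.

(* Continuity of inversion at zero: elements y outside a neighbourhood W of
   zero fall into finitely many cells, each of which avoids a neighbourhood of
   zero; inverting swaps range and domain, so near zero x⁻¹ ∈ W. *)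
Lemma inv_continuous_at_zero : continuous_at T T inv z.
Proof.
  intros W HW Wz. rewrite inv_zero in Wz.
  destruct (finitely_many_ranges HW Wz) as [lr Hr].
  destruct (finitely_many_domains HW Wz) as [ld Hd].
  destruct (near_list (P := fun c x => x <> z -> ~ (x · inv x = fst c /\ inv x · x = snd c))
              (l := list_prod ld lr) (fun c _ => cell_isolated (fst c) (snd c)))
    as [U [HU [Uz HUc]]].
  exists U. split; [exact HU|split; [exact Uz|]]. intros x Ux. apply NNPP. intro Wx.
  apply (HUc x Ux (x · inv x, inv x · x)).
  - apply in_prod.
    + pose proof (Hd _ Wx) as H. rewrite inv_inv in H. exact H.
    + pose proof (Hr _ Wx) as H. rewrite inv_inv in H. exact H.
  - intros ->. rewrite inv_zero in Wx. exact (Wx Wz).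
  - split; reflexivity.
Qed.

(* Continuity of inversion at a non-zero a with range e and domain f: near a
   every x has range e and domain f, so x = a·g with g = a⁻¹·x in the H-class
   of f, and x⁻¹ = g⁻¹·a⁻¹ depends continuously on g. *)
Lemma inv_continuous_at_nonzero a : a <> z -> continuous_at T T inv a.
Proof.
  intros az W HW Wa.
  set (e := a · inv a). set (f := inv a · a).
  assert (Ef : f · f = f) by apply domain_idem.
  assert (Ee : e · e = e) by apply range_idem.
  destruct (hclass_inv_continuous Ef (open_rmul mul_continuous (inv a) HW)) as [U0 [HU0 EU0]].
  exists (fun x => (e · x <> z /\ x · f <> z) /\ U0 (inv a · x)). split; [|split].
  - repeat apply open_inter.
    + exact (open_lmul mul_continuous e (open_neq hausdorff_T z)).
    + exact (open_rmul mul_continuous f (open_neq hausdorff_T z)).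
    + exact (open_lmul mul_continuous (inv a) HU0).
  - split; [split|].
    + unfold e. rewrite inv_l. exact az.
    + unfold f. rewrite assoc, inv_l. exact az.
    + apply EU0; [apply hclass_self, Ef|].
      fold f. rewrite (idem_inv Ef). unfold f. rewrite inv_r. exact Wa.
  - intros x [[ex xf] Ux].
    pose proof (range_of_nonzero Ee ex) as xe. pose proof (domain_of_nonzero Ef xf) as xf'.
    apply (EU0 _ (hclass_translate eq_refl eq_refl xe xf')) in Ux.
    rewrite inv_mul, inv_inv, <- assoc in Ux. fold e in Ux.
    rewrite <- xe, assoc, inv_r in Ux. exact Ux.
Qed.

Lemma inv_continuous_of_subgroups : continuous T T inv.
Proof.
  apply continuous_of_continuous_at. intro a.
  destruct (classic (a = z)) as [->|az];
    [exact inv_continuous_at_zero | exact (inv_continuous_at_nonzero az)].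
Qed.

End Topological.
End Primitive.
End InverseSemigroup.

Theorem corollary3p11 (S : Type) (T : topology S) (mul : S -> S -> S) (inv : S -> S) :
  topological_semigroup mul T ->
  countably_compact T ->
  primitive_inverse_semigroup mul ->
  (* inv is the inversion x |-> x^{-1} of the inverse semigroup *)
  (forall x, mul (mul x (inv x)) x = x /\ mul (mul (inv x) x) (inv x) = inv x) ->
  (continuous T T inv <->
   forall (G : S -> Prop) (e : S), maximal_subgroup mul G e -> topological_subgroup mul T G e).
Proof.
  intros [Hhaus [Hassoc Hmul]] Hcc [[_ Hunique] [z [Hzero [_ Hprim]]]] Hinv.
  split.
  - intros Hinv_cont G e [HG _]. exact (subgroup_topological Hunique Hinv Hmul Hinv_cont HG).
  - exact (inv_continuous_of_subgroups Hassoc Hunique Hinv Hzero Hprim Hhaus Hmul Hcc).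
Qed.
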